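(* Let $1\le q<p$, $k\in\mathbb{N}$, and $x\in\mathbb{R}^n\setminus\{0\}$. (1) Let $\varepsilon>0$. If $x$ is $(k,\varepsilon)$-$\ell_p$-compressible, then $\Delta_{q,p}(x)\ge\frac{1}{(k/n)^{1/q-1/p}+\varepsilon}$. (2) The vector $x$ is $\left(k,\frac{(n/k)^{1/q}}{\Delta_{q,p}(x)}\right)$-$\ell_p$-compressible. In particular, if a subspace $X\subseteq\mathbb{R}^n$ is $(k,\varepsilon)$-$\ell_p$-spread, then $\Delta_{q,p}(X)\le\frac{1}{\varepsilon}\left(\frac{n}{k}\right)^{1/q}$ for all $1\le q<p$.
   Context: A vector $y$ is $k$-sparse if $|\mathrm{supp}(y)|\le k$. A nonzero $x$ is $(k,\varepsilon)$-$\ell_p$-compressible if some $k$-sparse $y$ has $\|x-y\|_p\le\varepsilon\|x\|_p$, and $(k,\varepsilon)$-$\ell_p$-spread otherwise; a subspace is $(k,\varepsilon)$-$\ell_p$-spread if all its nonzero vectors are. For nonzero $x\in\mathbb{R}^n$, $\Delta_{q,p}(x):=\frac{\|x\|_p\, n^{1/q-1/p}}{\|x\|_q}$, and for a subspace $X$, $\Delta_{q,p}(X):=\sup\{\Delta_{q,p}(x):x\in X\setminus\{0\}\}$. *)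

From HB Require Import structures.
From mathcomp Require Import all_boot all_order all_algebra.
From mathcomp Require Import all_classical all_reals.
From mathcomp Require Import ereal exp.
Set Implicit Arguments. Unset Strict Implicit. Unset Printing Implicit Defensive.
Import Order.TTheory GRing.Theory Num.Theory.
Local Open Scope ring_scope.
Local Open Scope classical_set_scope.

Section Defs.
Variables (R : realType) (n : nat).

Definition lpnorm (p : R) (x : 'rV[R]_n) : R :=
  (\sum_(i < n) `|x 0 i| `^ p) `^ p^-1.

Definition supp (y : 'rV[R]_n) : {set 'I_n} := [set i | y 0 i != 0].

Definition sparse (k : nat) (y : 'rV[R]_n) : Prop := (#|supp y| <= k)%N.

Definition compressible (p : R) (k : nat) (eps : R) (x : 'rV[R]_n) : Prop :=
  x != 0 /\ exists y, sparse k y /\ lpnorm p (x - y) <= eps * lpnorm p x.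

Definition spread (p : R) (k : nat) (eps : R) (x : 'rV[R]_n) : Prop :=
  x != 0 /\ ~ compressible p k eps x.

Definition spread_subspace (p : R) (k : nat) (eps : R) (X : {vspace 'rV[R]_n}) : Prop :=
  forall x, x \in X -> x != 0 -> spread p k eps x.

Definition Delta (q p : R) (x : 'rV[R]_n) : R :=
  lpnorm p x * n%:R `^ (q^-1 - p^-1) / lpnorm q x.

Definition Delta_subspace (q p : R) (X : {vspace 'rV[R]_n}) : \bar R :=
  ereal_sup [set (Delta q p x)%:E | x in [set x | x \in X /\ x != 0]].

End Defs.

From HB Require Import structures.
From mathcomp Require Import all_boot all_order all_algebra.
From mathcomp Require Import all_classical all_reals.
From mathcomp Require Import ereal exp.
From mathcomp Require Import ring lra.
Import Order.TTheory GRing.Theory Num.Theory.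
Set Implicit Arguments. Unset Strict Implicit. Unset Printing Implicit Defensive.
Local Open Scope ring_scope.

(* (1) Let y be k-sparse with support S and ||x - y||_p <= eps ||x||_p.  Since
   t |-> t^(1/q) is subadditive, ||x||_q <= ||x_S||_q + ||x_(~S)||_q, and the
   power-mean (Hoelder) inequality ||z||_q <= m^(1/q - 1/p) ||z||_p on m coordinates
   bounds the two terms by k^(1/q-1/p) ||x||_p and n^(1/q-1/p) ||(x - y)_(~S)||_p
   <= n^(1/q-1/p) eps ||x||_p; dividing gives the lower bound on Delta.
   (2) Keep the coordinates of x above t = ||x||_q / k^(1/q).  By Chebyshev there
   are at most k of them, and every discarded coordinate is at most t, so the
   error is at most n^(1/p) t = (n/k)^(1/q) ||x||_p / Delta_(q,p)(x).
   The bound for spread subspaces is the contrapositive of (2). *)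

Section PowR.
Variable R : realType.
Implicit Types a b r s : R.

Lemma powRVK a r : 0 <= a -> r != 0 -> (a `^ r^-1) `^ r = a.
Proof. by move=> a0 r0; rewrite -powRrM mulVf // powRr1. Qed.

Lemma powRKV a r : 0 <= a -> r != 0 -> (a `^ r) `^ r^-1 = a.
Proof. by move=> a0 r0; rewrite -powRrM mulfV // powRr1. Qed.

Lemma powRVl a r : 0 <= a -> a^-1 `^ r = (a `^ r)^-1.
Proof. by move=> a0; rewrite -powR_inv1 // -powRrM mulN1r powRN. Qed.

Lemma ler_powR2r r a b : 0 <= r -> 0 <= a -> a <= b -> a `^ r <= b `^ r.
Proof. by move=> r0 a0 ab; apply: ge0_ler_powR; rewrite // nnegrE (le_trans a0). Qed.

Lemma powRD_ge s a b : 1 <= s -> 0 <= a -> 0 <= b -> a `^ s + b `^ s <= (a + b) `^ s.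
Proof.
move=> s1 a0 b0; have s0 : 0 < s by lra.
rewrite -(mulr_powRB1 a0 s0) -(mulr_powRB1 b0 s0).
rewrite -(@mulr_powRB1 _ (a + b)) ?addr_ge0 // mulrDl.
by apply: lerD; apply: ler_wpM2l => //; apply: ler_powR2r; lra.
Qed.

Lemma powRD_le r a b : 0 < r -> r <= 1 -> 0 <= a -> 0 <= b ->
  (a + b) `^ r <= a `^ r + b `^ r.
Proof.
move=> r0 r1 a0 b0; have r0' : r != 0 by rewrite gt_eqF.
have s1 : 1 <= r^-1 by rewrite invf_ge1.
have := powRD_ge s1 (powR_ge0 a r) (powR_ge0 b r); rewrite !powRKV //.
move=> /(ler_powR2r (ltW r0) (addr_ge0 a0 b0)).
by rewrite powRVK // addr_ge0 ?powR_ge0.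
Qed.

End PowR.

Section FiniteSums.
Variables (R : realType) (I : finType).
Implicit Types (A : {set I}) (c : I -> R).

Lemma sum_le_card_powR r A c : 1 < r -> (forall i, 0 <= c i) ->
  \sum_(i in A) c i <= #|A|%:R `^ (1 - r^-1) * (\sum_(i in A) c i `^ r) `^ r^-1.
Proof.
move=> r1 c0; have r0 : 0 < r by lra.
have [A0|mA] := eqVneq #|A| 0%N.
  by rewrite big_pred0 ?mulr_ge0 ?powR_ge0 // => i; rewrite (card0_eq A0).
set m := #|A|%:R; set N := (\sum_(i in A) c i `^ r) `^ r^-1.
have m0 : 0 < m by rewrite ltr0n lt0n.
have [N0|N0] := eqVneq N 0.
  have /eqP := powR_eq0_eq0 N0; rewrite psumr_eq0 => [/allP cA|i _]; last exact: powR_ge0.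
  rewrite big1 ?mulr_ge0 ?powR_ge0 // => i iA.
  by move: (cA i (mem_index_enum i)); rewrite iA => /eqP/powR_eq0_eq0.
have {}N0 : 0 < N by rewrite lt_def N0 powR_ge0.
set s := (1 - r^-1)^-1.
have s0 : 0 < s by rewrite invr_gt0 subr_gt0 invf_lt1.
have rs : r^-1 + s^-1 = 1 by rewrite invrK; ring.
set u := (m `^ (1 - r^-1))^-1.
have us : u `^ s = m^-1.
  rewrite powRVl ?powR_ge0 // -powRrM mulfV ?powRr1 ?ltW //.
  by rewrite gt_eqF // subr_gt0 invf_lt1.
(* Young's inequality with exponents [r] and [s] bounds each [c i / N * u];
   summed over [A], the bounds add up to [1/r + 1/s = 1]. *)
have young i : c i / N * u <= (c i / N) `^ r / r + m^-1 / s.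
  rewrite -us; apply: conjugate_powR => //; last by rewrite invr_ge0 powR_ge0.
  exact: divr_ge0 (c0 i) (ltW N0).
have sum_cN : \sum_(i in A) (c i / N) `^ r = 1.
  have NS : N `^ r = \sum_(i in A) c i `^ r.
    by rewrite powRVK ?gt_eqF // sumr_ge0 // => i _; rewrite powR_ge0.
  have -> : \sum_(i in A) (c i / N) `^ r = \sum_(i in A) c i `^ r / N `^ r.
    by apply: eq_bigr => i _; rewrite powRM ?invr_ge0 ?(ltW N0) // powRVl ?(ltW N0).
  by rewrite -big_distrl /= -NS mulfV // gt_eqF // powR_gt0.
have : \sum_(i in A) c i / N * u <= \sum_(i in A) ((c i / N) `^ r / r + m^-1 / s).
  by apply: ler_sum => i _; exact: young.
have -> : \sum_(i in A) ((c i / N) `^ r / r + m^-1 / s) = 1.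
  rewrite big_split /= -big_distrl /= sum_cN sumr_const -mulr_natr -/m.
  by rewrite mulrAC mulVf ?gt_eqF // !mul1r.
rewrite -!big_distrl /= /u ler_pdivrMr ?powR_gt0 // ler_pdivrMr //.
by rewrite mul1r.
Qed.

Lemma powR_mean_le q p A c : 0 < q -> q < p -> (forall i, 0 <= c i) ->
  (\sum_(i in A) c i `^ q) `^ q^-1 <=
  #|A|%:R `^ (q^-1 - p^-1) * (\sum_(i in A) c i `^ p) `^ p^-1.
Proof.
move=> q0 qp c0; have p0 : 0 < p by lra.
have pq1 : 1 < p / q by rewrite ltr_pdivlMr // mul1r.
have := sum_le_card_powR A pq1 (fun i => powR_ge0 (c i) q).
have -> : \sum_(i in A) (c i `^ q) `^ (p / q) = \sum_(i in A) c i `^ p.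
  by apply: eq_bigr => i _; rewrite -powRrM mulrCA mulfV ?gt_eqF // mulr1.
have qV0 : 0 <= q^-1 by rewrite invr_ge0 ltW.
move=> /(ler_powR2r qV0 (sumr_ge0 _ (fun i _ => powR_ge0 _ _))).
rewrite powRM ?powR_ge0 // -!powRrM.
have -> : (1 - (p / q)^-1) * q^-1 = q^-1 - p^-1 by field; rewrite !gt_eqF.
by have -> : (p / q)^-1 * q^-1 = p^-1 by field; rewrite !gt_eqF.
Qed.

Lemma sum_split_setC A (F : I -> R) :
  \sum_i F i = \sum_(i in A) F i + \sum_(i in ~: A) F i.
Proof. by rewrite (bigID (mem A)) /=; congr (_ + _); apply: eq_bigl => i; rewrite inE. Qed.

Lemma ler_sum_set A (F : I -> R) : (forall i, 0 <= F i) ->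
  \sum_(i in A) F i <= \sum_i F i.
Proof. by move=> F0; rewrite (sum_split_setC A) lerDl sumr_ge0. Qed.

Lemma card_gt_mulr_powR_le t q c : 0 <= t -> 0 <= q ->
  #|[set i | t < c i]|%:R * t `^ q <= \sum_i c i `^ q.
Proof.
move=> t0 q0; rewrite mulr_natl -sumr_const.
apply: le_trans (ler_sum_set _ (fun i => powR_ge0 _ _)).
by apply: ler_sum => i; rewrite inE => /ltW; apply: ler_powR2r.
Qed.

Lemma sum_powR_le_card t r c : 0 <= r -> (forall i, 0 <= c i <= t) ->
  \sum_i c i `^ r <= #|I|%:R * t `^ r.
Proof.
move=> r0 ct; rewrite mulr_natl -sumr_const.
by apply: ler_sum => i _; have /andP[] := ct i; apply: ler_powR2r.
Qed.

End FiniteSums.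

Section Spread.
Variables (R : realType) (n : nat).
Implicit Types (p q eps t : R) (A : {set 'I_n}) (x y : 'rV[R]_n) (X : {vspace 'rV[R]_n}).

Lemma row_neq0_exists x : x != 0 -> exists i, x 0 i != 0.
Proof.
move=> x0; apply/existsP; apply: contraR x0 => /existsPn x0.
by apply/eqP/rowP => j; rewrite mxE; apply/eqP; rewrite -[_ == _]negbK x0.
Qed.

Lemma dim_gt0 x : x != 0 -> (0 < n)%N.
Proof. by case/row_neq0_exists => i _; apply: leq_ltn_trans (ltn_ord i). Qed.

Lemma lpnorm_ge0 p x : 0 <= lpnorm p x.
Proof. exact: powR_ge0. Qed.

Lemma lpnorm_gt0 p x : x != 0 -> 0 < lpnorm p x.
Proof.
case/row_neq0_exists => i xi; apply: powR_gt0.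
rewrite (bigD1 i) //= ltr_pwDl ?powR_gt0 ?normr_gt0 //.
by apply: sumr_ge0 => j _; apply: powR_ge0.
Qed.

Lemma lpnorm_powR p x : p != 0 -> lpnorm p x `^ p = \sum_i `|x 0 i| `^ p.
Proof. by move=> p0; rewrite powRVK // sumr_ge0 // => i _; apply: powR_ge0. Qed.

Lemma Delta_gt0 q p x : x != 0 -> 0 < Delta q p x.
Proof.
move=> x0; rewrite divr_gt0 ?mulr_gt0 ?lpnorm_gt0 ?powR_gt0 //.
by rewrite ltr0n (dim_gt0 x0).
Qed.

Definition lpnorm_on p A x : R := (\sum_(i in A) `|x 0 i| `^ p) `^ p^-1.

Lemma lpnorm_on_le p A x : 0 <= p -> lpnorm_on p A x <= lpnorm p x.
Proof.
move=> p0; apply: ler_powR2r; rewrite ?invr_ge0 //.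
  by apply: sumr_ge0 => i _; apply: powR_ge0.
by apply: ler_sum_set => i; apply: powR_ge0.
Qed.

Lemma lpnorm_on_eq p A x y : {in A, forall i, `|x 0 i| = `|y 0 i|} ->
  lpnorm_on p A x = lpnorm_on p A y.
Proof. by move=> xy; congr (_ `^ _); apply: eq_bigr => i /xy ->. Qed.

Lemma lpnorm_le_split q A x : 1 <= q ->
  lpnorm q x <= lpnorm_on q A x + lpnorm_on q (~: A) x.
Proof.
move=> q1; rewrite /lpnorm (sum_split_setC A) powRD_le ?invr_gt0 ?invf_le1 //; try lra.
all: by apply: sumr_ge0 => i _; apply: powR_ge0.
Qed.

Lemma lpnorm_on_le_card q p A x : 0 < q -> q < p ->
  lpnorm_on q A x <= #|A|%:R `^ (q^-1 - p^-1) * lpnorm_on p A x.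
Proof. by move=> q0 qp; apply: powR_mean_le => // i; apply: normr_ge0. Qed.

Lemma compressible_lpnorm_le q p k eps x : 1 <= q -> q < p ->
  compressible p k eps x ->
  lpnorm q x <= (k%:R `^ (q^-1 - p^-1) + eps * n%:R `^ (q^-1 - p^-1)) * lpnorm p x.
Proof.
move=> q1 qp; have q0 : 0 < q := lt_le_trans ltr01 q1.
have p0 : 0 < p := lt_trans q0 qp.
have a0 : 0 <= q^-1 - p^-1 by rewrite subr_ge0 lef_pV2 ?posrE // ltW.
move=> [_ [y [ky xy]]]; set S := supp y.
apply: (le_trans (lpnorm_le_split S x q1)); rewrite mulrDl; apply: lerD.
  apply: (le_trans (lpnorm_on_le_card S x q0 qp)).
  apply: ler_pM; rewrite ?powR_ge0 ?(lpnorm_on_le _ _ (ltW p0)) //.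
  by apply: (ler_powR2r a0); rewrite // ler_nat.
apply: (le_trans (lpnorm_on_le_card (~: S) x q0 qp)).
rewrite mulrAC [X in _ <= X]mulrC; apply: ler_pM; [exact: powR_ge0 | exact: powR_ge0 | |].
  apply: (ler_powR2r a0); rewrite // ler_nat -[n in (_ <= n)%N]card_ord.
  exact: max_card.
have xyS : {in ~: S, forall i, `|x 0 i| = `|(x - y) 0 i|}.
  by move=> i; rewrite !inE negbK !mxE => /eqP ->; rewrite subr0.
by rewrite (lpnorm_on_eq p xyS) (le_trans (lpnorm_on_le _ _ (ltW p0))).
Qed.

Lemma compressible_Delta_ge q p k eps x : 1 <= q -> q < p -> 0 < eps ->
  compressible p k eps x ->
  1 / ((k%:R / n%:R) `^ (q^-1 - p^-1) + eps) <= Delta q p x.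
Proof.
move=> q1 qp e0 cx; have [x0 _] := cx.
have := compressible_lpnorm_le q1 qp cx.
have N0 : 0 < n%:R `^ (q^-1 - p^-1) by rewrite powR_gt0 // ltr0n (dim_gt0 x0).
rewrite /Delta powRM ?invr_ge0 ?ler0n // powRVl ?ler0n //.
move: (lpnorm_gt0 p x0) (lpnorm_gt0 q x0) N0 (powR_ge0 k%:R (q^-1 - p^-1)).
move: (lpnorm p x) (lpnorm q x) (n%:R `^ _) (k%:R `^ _) => Np Nq N K Np0 Nq0 N0 K0 Nq_le.
have KN0 : 0 < K + eps * N := ltr_wpDl K0 (mulr_gt0 e0 N0).
have -> : K / N + eps = (K + eps * N) / N by field; rewrite gt_eqF.
rewrite div1r invf_div ler_pdivrMr // mulrAC ler_pdivlMr //.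
by rewrite mulrC mulrAC ler_pM2r // mulrC.
Qed.

Definition large_part t x : 'rV[R]_n := \row_i (if t < `|x 0 i| then x 0 i else 0).

Lemma sparse_large_part k q t x : 0 < q -> 0 < t ->
  lpnorm q x `^ q <= k%:R * t `^ q -> sparse k (large_part t x).
Proof.
move=> q0 t0 xk.
have supp_large : supp (large_part t x) \subset [set i | t < `|x 0 i|].
  by apply/fintype.subsetP => i; rewrite !inE mxE; case: ifP; rewrite ?eqxx.
apply: leq_trans (subset_leq_card supp_large) _.
have := card_gt_mulr_powR_le (fun i => `|x 0 i|) (ltW t0) (ltW q0).
rewrite -lpnorm_powR ?gt_eqF // => /le_trans /(_ xk).
by rewrite ler_pM2r ?powR_gt0 // ler_nat.
Qed.

Lemma lpnorm_sub_large_part p t x : 0 < p -> 0 <= t ->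
  lpnorm p (x - large_part t x) <= n%:R `^ p^-1 * t.
Proof.
move=> p0 t0.
have small i : 0 <= `|(x - large_part t x) 0 i| <= t.
  rewrite normr_ge0 !mxE; case: ifPn => [_|]; first by rewrite subrr normr0.
  by rewrite subr0 -leNgt.
have pV0 : 0 <= p^-1 by rewrite invr_ge0 ltW.
have := sum_powR_le_card (ltW p0) small; rewrite card_ord.
move=> /(ler_powR2r pV0 (sumr_ge0 _ (fun i _ => powR_ge0 _ _))).
by rewrite powRM ?ler0n ?powR_ge0 // powRKV ?gt_eqF.
Qed.

Lemma compressible_Delta q p k x : 0 < q -> 0 < p -> (0 < k)%N -> x != 0 ->
  compressible p k ((n%:R / k%:R) `^ q^-1 / Delta q p x) x.
Proof.
move=> q0 p0 k0 x0; split => //.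
have kq0 : 0 < k%:R `^ q^-1 by rewrite powR_gt0 // ltr0n.
(* [t] is chosen so that [k * t `^ q = lpnorm q x `^ q]. *)
pose t := lpnorm q x / k%:R `^ q^-1.
have t0 : 0 < t := divr_gt0 (lpnorm_gt0 q x0) kq0.
exists (large_part t x); split.
  apply: (sparse_large_part q0 t0).
  rewrite powRM ?invr_ge0 ?lpnorm_ge0 ?powR_ge0 // powRVl ?powR_ge0 // powRVK ?ler0n ?gt_eqF //.
  by rewrite mulrCA mulfV ?mulr1 // pnatr_eq0 -lt0n.
apply: le_trans (lpnorm_sub_large_part x p0 (ltW t0)) _.
have n0 : n%:R != 0 :> R by rewrite pnatr_eq0 -lt0n (dim_gt0 x0).
have Np0 := lpnorm_gt0 p x0; have Nq0 := lpnorm_gt0 q x0.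
have nq0 : 0 < n%:R `^ q^-1 by rewrite powR_gt0 // lt0r n0 /=.
have np0 : 0 < n%:R `^ p^-1 by rewrite powR_gt0 // lt0r n0 /=.
rewrite /Delta /t powRM ?invr_ge0 // powRVl // powRB ?n0 ?implybT //.
rewrite le_eqVlt; apply/orP; left; apply/eqP.
move: Np0 Nq0 nq0 np0 kq0.
move: (lpnorm p x) (lpnorm q x) (n%:R `^ q^-1) (n%:R `^ p^-1) (k%:R `^ q^-1).
by move=> Np Nq nq np kq *; field; rewrite ?gt_eqF.
Qed.

Lemma compressibleW p k eps (eps' : R) x : eps <= eps' ->
  compressible p k eps x -> compressible p k eps' x.
Proof.
move=> ee' [x0 [y [ky xy]]]; split => //; exists y; split => //.
by apply: (le_trans xy); rewrite ler_wpM2r ?lpnorm_ge0.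
Qed.

Lemma spread_Delta_subspace_le q p k eps X : 0 < q -> 0 < p -> (0 < k)%N -> 0 < eps ->
  spread_subspace p k eps X ->
  (Delta_subspace q p X <= (eps^-1 * (n%:R / k%:R) `^ q^-1)%:E)%E.
Proof.
move=> q0 p0 k0 e0 spX; apply: ub_ereal_sup => _ [x [xX x0] <-].
rewrite lee_fin leNgt; apply/negP => lt_Delta.
have [_] := spX x xX x0; apply.
apply: compressibleW (compressible_Delta q0 p0 k0 x0).
have D0 := Delta_gt0 q p x0.
rewrite -(ltr_pM2l e0) mulrA mulfV ?gt_eqF // mul1r in lt_Delta.
by rewrite ler_pdivrMr // ltW.
Qed.

End Spread.

Unset Implicit Arguments.

Theorem proposition3p11 (R : realType) (n : nat) (q p : R) (k : nat)
  (x : 'rV[R]_n) (hq : 1 <= q) (hqp : q < p) (hx : x != 0) :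
  (forall eps : R, 0 < eps -> compressible p k eps x ->
     Delta q p x >= 1 / ((k%:R / n%:R) `^ (q^-1 - p^-1) + eps))
  /\ ((0 < k)%N ->
     compressible p k ((n%:R / k%:R) `^ q^-1 / Delta q p x) x)
  /\ (forall (eps : R) (X : {vspace 'rV[R]_n}), (0 < k)%N -> 0 < eps ->
     spread_subspace p k eps X ->
     forall q' : R, 1 <= q' -> q' < p ->
     (Delta_subspace q' p X <= (eps^-1 * (n%:R / k%:R) `^ q'^-1)%:E)%E).
Proof.
have q0 : 0 < q := lt_le_trans ltr01 hq.
have p0 : 0 < p := lt_trans q0 hqp.
split; first by move=> eps; exact: compressible_Delta_ge.
split; first by move=> k0; exact: compressible_Delta.
move=> eps X k0 e0 spX q' q'1 _.
exact: spread_Delta_subspace_le (lt_le_trans ltr01 q'1) p0 k0 e0 spX.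
Qed.
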